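(* Let $G\subseteq\mathrm{GL}_n(\mathbb R)$ be a Zariski-closed subgroup that is closed under transposes and under non-zero scalar multiples, let $G_{\mathrm{SL}}=\{g\in G:\det g=1\}$, and let $Y\in(\mathbb R^n)^m$. If the MLE given $Y$ for the Gaussian group model $\mathcal M_G$ exists uniquely, then the stabilizer $(G_{\mathrm{SL}})_Y$ of $Y$ under the diagonal action is compact.
   Context: The Gaussian group model is $\mathcal M_G=\{g^{T}g:g\in G\}$, the centered Gaussians on $\mathbb R^n$ with these concentration matrices. For $Y=(Y_1,\dots,Y_m)$, the log-likelihood is $l_Y(\Psi)=\frac m2\log\det\Psi-\frac12\mathrm{Tr}(\Psi\sum_iY_iY_i^T)$ on $\mathcal M_G$, and an MLE is a maximizer of $l_Y$ on $\mathcal M_G$. $G_{\mathrm{SL}}$ acts diagonally: $g\cdot Y=(gY_1,\dots,gY_m)$, and $(G_{\mathrm{SL}})_Y=\{g\in G_{\mathrm{SL}}: g\cdot Y=Y\}$, with the subspace topology from $\mathrm{GL}_n(\mathbb R)$. *)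

From HB Require Import structures.
From mathcomp Require Import all_boot all_order all_algebra.
From mathcomp Require Import all_classical all_reals all_analysis.
Set Implicit Arguments. Unset Strict Implicit. Unset Printing Implicit Defensive.
Import Order.TTheory GRing.Theory Num.Theory.
Import numFieldNormedType.Exports.
Local Open Scope ring_scope.
Local Open Scope classical_set_scope.

Inductive is_poly_fun (R : realType) (n : nat) : ('M[R]_n -> R) -> Prop :=
| pf_const (c : R) : is_poly_fun (fun _ => c)
| pf_coord (i j : 'I_n) : is_poly_fun (fun A => A i j)
| pf_add f g : is_poly_fun f -> is_poly_fun g -> is_poly_fun (fun A => f A + g A)
| pf_mul f g : is_poly_fun f -> is_poly_fun g -> is_poly_fun (fun A => f A * g A).

Definition is_GL_subgroup (R : realType) (n : nat) (G : set 'M[R]_n) : Prop :=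
  (forall g, G g -> g \in unitmx) /\
  G 1%:M /\
  (forall g h, G g -> G h -> G (g *m h)) /\
  (forall g, G g -> G (invmx g)).

Definition zariski_closed_in_GL (R : realType) (n : nat) (G : set 'M[R]_n) : Prop :=
  exists F : set ('M[R]_n -> R),
    (forall f, F f -> is_poly_fun f) /\
    G = [set A | A \in unitmx /\ forall f, F f -> f A = 0].

Definition G_SL (R : realType) (n : nat) (G : set 'M[R]_n) : set 'M[R]_n :=
  [set g | G g /\ \det g = 1].

Definition gauss_group_model (R : realType) (n : nat) (G : set 'M[R]_n) : set 'M[R]_n :=
  [set Psi | exists2 g, G g & Psi = g^T *m g].

Definition scatter (R : realType) (n m : nat) (Y : 'I_m -> 'cV[R]_n) : 'M[R]_n :=
  \sum_(i < m) (Y i *m (Y i)^T).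

Definition loglik (R : realType) (n m : nat) (Y : 'I_m -> 'cV[R]_n) (Psi : 'M[R]_n) : R :=
  (m%:R / 2) * ln (\det Psi) - (1 / 2) * \tr (Psi *m scatter Y).

Definition is_MLE (R : realType) (n m : nat) (G : set 'M[R]_n)
    (Y : 'I_m -> 'cV[R]_n) (Psi : 'M[R]_n) : Prop :=
  gauss_group_model G Psi /\
  forall Psi', gauss_group_model G Psi' -> loglik Y Psi' <= loglik Y Psi.

Definition MLE_exists_uniquely (R : realType) (n m : nat) (G : set 'M[R]_n)
    (Y : 'I_m -> 'cV[R]_n) : Prop :=
  exists Psi, is_MLE G Y Psi /\ forall Psi', is_MLE G Y Psi' -> Psi' = Psi.

Definition stabilizer (R : realType) (n m : nat) (H : set 'M[R]_n)
    (Y : 'I_m -> 'cV[R]_n) : set 'M[R]_n :=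
  [set g | H g /\ forall i, g *m Y i = Y i].

From HB Require Import structures.
From mathcomp Require Import all_boot all_order all_algebra.
From mathcomp Require Import all_classical all_reals all_analysis.
From mathcomp Require Import lra.
Set Implicit Arguments. Unset Strict Implicit. Unset Printing Implicit Defensive.
Import Order.TTheory GRing.Theory Num.Theory.
Import numFieldNormedType.Exports.
Local Open Scope ring_scope.
Local Open Scope classical_set_scope.

(* Let Psi = h^T h be the unique MLE.  An element g of the stabilizer has
   det g = 1 and fixes the scatter matrix, so g^T Psi g has the same
   log-likelihood as Psi and is again in the model; by uniqueness
   g^T Psi g = Psi.  Thus hg has the same Gram matrix as h, its entries are
   bounded by the diagonal of Psi, and g = h^-1 (hg) is bounded.  The
   stabilizer is cut out by polynomial equations, hence closed, and closed
   bounded sets of matrices are compact. *)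

Section PolyFun.
Variables (R : realType) (n : nat).

Lemma is_poly_fun_big (I : Type) (op : R -> R -> R) (idx : R) (r : seq I)
    (P : pred I) (F : I -> 'M[R]_n -> R) :
  (forall f g : 'M[R]_n -> R, is_poly_fun f -> is_poly_fun g ->
     is_poly_fun (fun A => op (f A) (g A))) ->
  (forall i, is_poly_fun (F i)) ->
  is_poly_fun (fun A => \big[op/idx]_(i <- r | P i) F i A).
Proof.
move=> opP FP; elim: r => [|a r IH].
  by under eq_fun do rewrite big_nil; exact: pf_const.
under eq_fun do rewrite big_cons; case: (P a) => //=.
exact: opP.
Qed.

Lemma is_poly_fun_det : is_poly_fun (fun A : 'M[R]_n => \det A).
Proof.
rewrite /determinant; apply: is_poly_fun_big (@pf_add R n) _ => s.
apply: pf_mul; first exact: pf_const.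
by apply: is_poly_fun_big (@pf_mul R n) _ => i; exact: pf_coord.
Qed.

Lemma is_poly_fun_mulmx_entry p (B : 'M[R]_(n, p)) i j :
  is_poly_fun (fun A : 'M[R]_n => (A *m B) i j).
Proof.
under eq_fun do rewrite mxE.
apply: is_poly_fun_big (@pf_add R n) _ => k.
by apply: pf_mul; [exact: pf_coord | exact: pf_const].
Qed.

Lemma is_poly_fun_continuous (f : 'M[R]_n -> R) :
  is_poly_fun f -> continuous f.
Proof.
elim=> [c|i j|f1 g1 _ IH1 _ IH2|f1 g1 _ IH1 _ IH2] A.
- exact: cst_continuous.
- exact: coord_continuous.
- exact: continuousD (IH1 A) (IH2 A).
- exact: continuousM (IH1 A) (IH2 A).
Qed.

Lemma closed_is_poly_fun_eq (f : 'M[R]_n -> R) (c : R) :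
  is_poly_fun f -> closed [set A | f A = c].
Proof.
move=> fP; apply: (@preimage_closed _ _ f [set x | x = c]).
  by move=> A _; exact: is_poly_fun_continuous.
exact: closed_eq.
Qed.

End PolyFun.

Lemma closed_G_SL (R : realType) n (G : set 'M[R]_n) :
  zariski_closed_in_GL G -> closed (G_SL G).
Proof.
move=> [F [FP ->]].
have -> : G_SL [set A | A \in unitmx /\ forall f, F f -> f A = 0] =
    (\bigcap_(f in F) [set A | f A = 0]) `&` [set A | \det A = 1].
  apply/seteqP; split=> A /=; first by move=> [[_ FA] dA].
  by move=> [FA dA]; do !split=> //; rewrite unitmxE dA unitr1.
apply: closedI; last exact/closed_is_poly_fun_eq/is_poly_fun_det.
by apply: closed_bigI => f /FP /closed_is_poly_fun_eq.
Qed.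

Lemma closed_stabilizer (R : realType) n m (H : set 'M[R]_n)
    (Y : 'I_m -> 'cV[R]_n) :
  closed H -> closed (stabilizer H Y).
Proof.
move=> Hcl.
have -> : stabilizer H Y = H `&` \bigcap_(i in setT) \bigcap_(k in setT)
    [set A | (A *m Y i) k 0 = Y i k 0].
  apply/seteqP; split=> A /= [HA AY]; split=> // i.
  - by move=> _ k _ /=; rewrite AY.
  - by apply/matrixP => k l; rewrite ord1; exact: AY.
apply: closedI => //; apply: closed_bigI => i _; apply: closed_bigI => k _.
exact/closed_is_poly_fun_eq/is_poly_fun_mulmx_entry.
Qed.

Lemma vec_mx_continuous (R : realType) p q :
  continuous (fun v : 'rV[R]_(p * q) => vec_mx v : 'M[R]_(p, q)).
Proof.
move=> v s /nbhs_ballP [e e0 es]; apply/nbhs_ballP; exists e => // w [_ vw].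
by apply: es; split=> // i j; rewrite !mxE; exact: vw.
Qed.

Lemma mx_box_compact (R : realType) p q (C : R) :
  compact [set A : 'M[R]_(p, q) | forall i j, `|A i j| <= C].
Proof.
pose box := [set v : 'rV[R]_(p * q) | forall k, `[- C, C]%classic (v ord0 k)].
have -> : [set A : 'M[R]_(p, q) | forall i j, `|A i j| <= C] =
    (fun v => vec_mx v) @` box.
  apply/seteqP; split=> A /=.
    move=> AC; exists (mxvec A); last exact: mxvecK.
    by case/mxvec_indexP=> i j; rewrite mxvecE /= in_itv /= -ler_norml.
  move=> [v vC <-] i j; rewrite mxE.
  by have := vC (mxvec_index i j); rewrite /= in_itv /= -ler_norml.
apply: (continuous_compact (continuous_subspaceT (@vec_mx_continuous R p q))).
apply: (@rV_compact _ _ (fun=> `[- C, C]%classic)) => _.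
exact: segment_compact.
Qed.

Section IsometryBound.
Variable R : realFieldType.

Lemma ler_sum_term (I : finType) (F : I -> R) k :
  (forall i, 0 <= F i) -> F k <= \sum_i F i.
Proof. by move=> F0; rewrite (bigD1 k) //= lerDl sumr_ge0. Qed.

Lemma gram_diag_ge0 p q (K : 'M[R]_(p, q)) j : 0 <= (K^T *m K) j j.
Proof. by rewrite mxE sumr_ge0 // => l _; rewrite mxE -expr2 sqr_ge0. Qed.

(* |x| <= 1 + x^2 avoids square roots. *)
Lemma gram_entry_bound p q (K : 'M[R]_(p, q)) i j :
  `|K i j| <= 1 + (K^T *m K) j j.
Proof.
have normK : `|K i j| <= 1 + K i j ^+ 2.
  by rewrite ler_norml; apply/andP; split; nra.
apply: le_trans normK _; rewrite lerD2l mxE.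
under eq_bigr do rewrite mxE -expr2.
exact: (ler_sum_term i (fun l => sqr_ge0 (K l j))).
Qed.

Lemma mulmx_entry_bound p q r (A : 'M[R]_(p, q)) (K : 'M[R]_(q, r)) b i j :
  (forall k, `|K k j| <= b) -> `|(A *m K) i j| <= (\sum_k `|A i k|) * b.
Proof.
move=> Kb; rewrite mxE mulr_suml; apply: le_trans (ler_norm_sum _ _ _) _.
by apply: ler_sum => k _; rewrite normrM ler_wpM2l.
Qed.

Lemma isometry_entries_bounded n (h : 'M[R]_n) : h \in unitmx ->
  exists C : R, forall g, g^T *m (h^T *m h) *m g = h^T *m h ->
    forall i j, `|g i j| <= C.
Proof.
move=> hU; set P := h^T *m h.
pose a := \sum_i \sum_k `|invmx h i k|.
exists (a * (1 + \tr P)) => g gP i j.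
have gramP : (h *m g)^T *m (h *m g) = P by rewrite -[RHS]gP trmx_mul !mulmxA.
have -> : g = invmx h *m (h *m g) by rewrite mulKmx.
apply: le_trans
  (mulmx_entry_bound (invmx h) i (fun k => gram_entry_bound (h *m g) k j)) _.
rewrite gramP; apply: ler_pM.
- by rewrite sumr_ge0.
- exact: addr_ge0 ler01 (gram_diag_ge0 h j).
- apply: (@ler_sum_term _ (fun i => \sum_k `|invmx h i k|)) => i'.
  by rewrite sumr_ge0.
- rewrite lerD2l; apply: (@ler_sum_term _ (fun j => P j j)) => j'.
  exact: gram_diag_ge0.
Qed.

End IsometryBound.

Lemma scatter_stabilizer (R : realType) n m (Y : 'I_m -> 'cV[R]_n) g :
  (forall i, g *m Y i = Y i) -> g *m scatter Y *m g^T = scatter Y.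
Proof.
move=> gY; rewrite /scatter mulmx_sumr mulmx_suml; apply: eq_bigr => i _.
by rewrite -mulmxA -mulmxA -trmx_mul [g *m _]mulmxA gY.
Qed.

Lemma loglik_congr (R : realType) n m (Y : 'I_m -> 'cV[R]_n) Psi g :
  \det g = 1 -> g *m scatter Y *m g^T = scatter Y ->
  loglik Y (g^T *m Psi *m g) = loglik Y Psi.
Proof.
move=> dg gS; rewrite /loglik.
have -> : \det (g^T *m Psi *m g) = \det Psi.
  by rewrite !det_mulmx det_tr dg mul1r mulr1.
by rewrite -[in RHS]gS -!mulmxA mxtrace_mulC !mulmxA.
Qed.

Lemma is_MLE_stabilizer (R : realType) n m (G : set 'M[R]_n)
    (Y : 'I_m -> 'cV[R]_n) Psi g :
  (forall g h, G g -> G h -> G (g *m h)) ->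
  is_MLE G Y Psi -> stabilizer (G_SL G) Y g ->
  is_MLE G Y (g^T *m Psi *m g).
Proof.
move=> GM [[h Gh ->] Psi_max] [[Gg dg] gY]; split.
  by exists (h *m g); [exact: GM | rewrite trmx_mul !mulmxA].
by move=> Psi' /Psi_max; rewrite loglik_congr // scatter_stabilizer.
Qed.

Theorem corollary2p4 (R : realType) (n m : nat) (G : set 'M[R]_n)
    (Y : 'I_m -> 'cV[R]_n) :
  is_GL_subgroup G ->
  zariski_closed_in_GL G ->
  (forall g, G g -> G g^T) ->
  (forall (c : R) g, c != 0 -> G g -> G (c *: g)) ->
  MLE_exists_uniquely G Y ->
  compact (stabilizer (G_SL G) Y).
Proof.
move=> [Gunit [_ [GM _]]] GZ _ _ [Psi [Psi_MLE Psi_uniq]].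
have [[h Gh Psi_h] _] := Psi_MLE.
have [C gC] := isometry_entries_bounded (Gunit _ Gh).
apply: (subclosed_compact _ (@mx_box_compact R n n C)).
  exact/closed_stabilizer/closed_G_SL.
move=> g Sg; apply: gC; rewrite -Psi_h.
exact/Psi_uniq/is_MLE_stabilizer.
Qed.
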